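(* Let $\mathcal X$ be finite with $N=|\mathcal X|\ge2$, $c\in(0,1/N]$, $\varepsilon\ge0$, and let $K\in\mathcal M(\varepsilon,c)$. Then for all $P_X,Q_X\in\mathcal Q_{\mathcal X}(c)$ with $\mathrm{TV}(P_X\|Q_X)\le\delta$, $$H^2(K\circ P_X\|K\circ Q_X)\le\Xi(\varepsilon,c)\left(2-\frac{4}{\sqrt{(1-Nc)e^\varepsilon+1}+1}\right)\delta,$$ where $\Xi(\varepsilon,c)=\min\left\{\frac{e^\varepsilon-1}{e^\varepsilon(1-Nc)+1},1\right\}$.
   Context: $H^2(P\|Q)=\sum_y Q(y)\big(1-\sqrt{P(y)/Q(y)}\big)^2$ is the squared Hellinger divergence (the $f$-divergence with $f(t)=(1-\sqrt t)^2$), and $\mathrm{TV}(P\|Q)=\frac12\sum|P-Q|$. A kernel $K$ is a row-stochastic matrix with entries $K_{Y|X=x}(y)$, $(K\circ P_X)(y)=\sum_xK_{Y|X=x}(y)P_X(x)$. PML: $\ell_{K\times P_X}(X\to y)=\log\frac{\max_x K_{Y|X=x}(y)}{(K\circ P_X)(y)}$ for full-support $P_X$ and $(K\circ P_X)(y)>0$. $\mathcal Q_{\mathcal X}(c)=\{P_X:\min_xP_X(x)\ge c\}$; $C(K,\mathcal P)=\sup_{P_X\in\mathcal P}\sup_{y:(K\circ P_X)(y)>0}\ell_{K\times P_X}(X\to y)$; $\mathcal M(\varepsilon,c)$ is the set of kernels from $\mathcal X$ to a finite output set with $C(K,\mathcal Q_{\mathcal X}(c))\le\varepsilon$. *)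

From mathcomp Require Import all_boot all_order all_algebra.
From mathcomp Require Import reals.
From mathcomp Require Import sequences exp.
Set Implicit Arguments. Unset Strict Implicit. Unset Printing Implicit Defensive.
Import Order.TTheory GRing.Theory Num.Theory.
Local Open Scope ring_scope.

Section Defs.
Variable R : realType.

Definition is_dist (X : finType) (P : X -> R) : Prop :=
  (forall x, 0 <= P x) /\ \sum_(x : X) P x = 1.

(* Markov kernel (row-stochastic matrix) K x y = K_{Y|X=x}(y) *)
Definition is_kernel (X Y : finType) (K : X -> Y -> R) : Prop :=
  forall x, is_dist (K x).

Definition push (X Y : finType) (K : X -> Y -> R) (P : X -> R) : Y -> R :=
  fun y => \sum_(x : X) K x y * P x.

Definition Qset (X : finType) (c : R) (P : X -> R) : Prop :=
  is_dist P /\ forall x, c <= P x.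

Definition pml (X Y : finType) (K : X -> Y -> R) (P : X -> R) (y : Y) : R :=
  ln ((\big[Num.max/0]_(x : X) K x y) / push K P y).

(* K in M(eps,c): C(K, Q_X(c)) <= eps, i.e. the supremum of the PML over
   P in Q_X(c) and y with (K o P)(y) > 0 is at most eps *)
Definition in_M (X Y : finType) (eps c : R) (K : X -> Y -> R) : Prop :=
  is_kernel K /\
  forall P : X -> R, Qset c P -> forall y : Y, 0 < push K P y -> pml K P y <= eps.

(* squared Hellinger divergence, f-divergence with f(t) = (1 - sqrt t)^2;
   for Q(y) = 0 the usual convention Q f(P/Q) = P(y) lim_{t->oo} f(t)/t = P(y) *)
Definition hellinger2 (Y : finType) (P Q : Y -> R) : R :=
  \sum_(y : Y) (if Q y == 0 then P y
                else Q y * (1 - Num.sqrt (P y / Q y)) ^+ 2).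

Definition TV (X : finType) (P Q : X -> R) : R :=
  2^-1 * \sum_(x : X) `|P x - Q x|.

Definition Xi (N : nat) (eps c : R) : R :=
  Num.min ((expR eps - 1) / (expR eps * (1 - N%:R * c) + 1)) 1.

End Defs.

From mathcomp Require Import all_boot all_order all_algebra.
From mathcomp Require Import reals.
From mathcomp Require Import sequences exp.
From mathcomp Require Import ring lra.
Set Implicit Arguments. Unset Strict Implicit. Unset Printing Implicit Defensive.
Import Order.TTheory GRing.Theory Num.Theory.
Local Open Scope ring_scope.

(* Testing the PML constraint on the vertices c + (1 - N c) 1_{x1} of Q_X(c)
   gives, for all x0, x1 and y,
     K(y|x0) <= e^eps (c sum_x K(y|x) + (1 - N c) K(y|x1)).
   Applied to a test function sg with values in [0, 1] and to 1 - sg, this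
   bounds the oscillation of x |-> sum_y sg(y) K(y|x) by Xi(eps, c), so that
   TV(K P, K Q) <= Xi TV(P, Q).  Averaged against inputs in Q_X(c), it gives
   the ratio bound (K P)(y) <= B (K Q)(y) with B = 1 + (1 - N c) e^eps, and
   under a two-sided ratio bound B every Hellinger summand (sqrt p - sqrt q)^2
   is at most (sqrt B - 1)/(sqrt B + 1) |p - q|, i.e. the squared Hellinger
   distance is at most (2 - 4/(sqrt B + 1)) times the total variation. *)


Section General.
Variables (R : realType) (X : finType).

Lemma TV_sum_pos (P Q : X -> R) :
  \sum_x P x = \sum_x Q x -> TV P Q = \sum_x Num.max (P x - Q x) 0.
Proof.
move=> PQ; have norm_max (d : R) : `|d| = 2 * Num.max d 0 - d.
  by case: (lerP 0 d) => hd; [rewrite ger0_norm | rewrite ltr0_norm]; lra.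
rewrite /TV; under eq_bigr do rewrite norm_max.
by rewrite sumrB [X in _ - X]sumrB PQ subrr subr0 -mulr_sumr; lra.
Qed.

Lemma sum_mul_le_osc (g D : X -> R) (b : R) :
  (forall x1 x2, g x1 - g x2 <= b) -> \sum_x D x = 0 ->
  \sum_x g x * D x <= b * \sum_x Num.max (D x) 0.
Proof.
move=> osc D0; case: (pickP (fun _ : X => true)) => [x0 _ | X0].
  2: by rewrite !big_pred0 ?mulr0.
have [x1 _ min_x1] := @arg_minP _ R X x0 xpredT g isT.
have -> : \sum_x g x * D x = \sum_x (g x - g x1) * D x.
  by under [RHS]eq_bigr do rewrite mulrBl; rewrite sumrB -mulr_sumr D0 mulr0 subr0.
rewrite mulr_sumr; apply: ler_sum => x _.
have := min_x1 x isT; have := osc x x1.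
by case: (lerP 0 (D x)) => hD; nra.
Qed.

Lemma sqr_subr_le_ratio (u v s : R) :
  0 <= u -> 0 <= v -> 1 <= s -> u <= s * v -> v <= s * u ->
  (u - v) ^+ 2 <= (s - 1) / (s + 1) * `|u ^+ 2 - v ^+ 2|.
Proof.
move=> u0 v0 s1 uv vu; rewrite mulrAC ler_pdivlMr; last lra.
case: (lerP v u) => h; [rewrite ger0_norm | rewrite ltr0_norm]; nra.
Qed.

Definition hellinger_summand (p q : R) : R :=
  if q == 0 then p else q * (1 - Num.sqrt (p / q)) ^+ 2.

Lemma hellinger_summand_le_ratio (p q B : R) :
  0 <= p -> 0 <= q -> 1 <= B -> p <= B * q -> q <= B * p ->
  hellinger_summand p q <= (Num.sqrt B - 1) / (Num.sqrt B + 1) * `|p - q|.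
Proof.
move=> p0 q0 B1 pq qp; rewrite /hellinger_summand.
have sB1 : 1 <= Num.sqrt B by rewrite -sqrtr1 ler_sqrt //; lra.
have [q_eq0 | q_neq0] := eqVneq q 0.
  have -> : p = 0 by apply/eqP; rewrite eq_le p0 andbT -(mulr0 B) -q_eq0.
  by rewrite q_eq0 subrr normr0 mulr0.
have q_gt0 : 0 < q by rewrite lt_def q_neq0.
have sqrt_le (a b : R) : 0 <= a -> 0 <= b -> a <= B * b ->
    Num.sqrt a <= Num.sqrt B * Num.sqrt b.
  by move=> a0 b0 ab; rewrite -sqrtrM ?ler_sqrt //; [nra | lra].
have -> : q * (1 - Num.sqrt (p / q)) ^+ 2 = (Num.sqrt p - Num.sqrt q) ^+ 2.
  rewrite sqrtrM // sqrtrV // -{1}(sqr_sqrtr q0).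
  by field; rewrite sqrtr_eq0 -ltNge.
rewrite -[p in `|p - _|](sqr_sqrtr p0) -[q in `|_ - q|](sqr_sqrtr q0).
by apply: sqr_subr_le_ratio; rewrite ?sqrtr_ge0 ?sqrt_le.
Qed.

Lemma hellinger2_le_TV (Y : finType) (P Q : Y -> R) (B : R) :
  (forall y, 0 <= P y) -> (forall y, 0 <= Q y) -> 1 <= B ->
  (forall y, P y <= B * Q y) -> (forall y, Q y <= B * P y) ->
  hellinger2 P Q <= (2 - 4 / (Num.sqrt B + 1)) * TV P Q.
Proof.
move=> P0 Q0 B1 PQ QP.
have sB1 : 1 <= Num.sqrt B by rewrite -sqrtr1 ler_sqrt //; lra.
have -> : (2 - 4 / (Num.sqrt B + 1)) * TV P Q =
    (Num.sqrt B - 1) / (Num.sqrt B + 1) * \sum_y `|P y - Q y|.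
  by rewrite /TV; field; lra.
rewrite mulr_sumr; apply: ler_sum => y _.
exact: hellinger_summand_le_ratio.
Qed.

End General.

Lemma Xi_ge0 (R : realType) (N : nat) (eps c : R) :
  0 <= eps -> 0 <= 1 - N%:R * c -> 0 <= Xi N eps c.
Proof.
move=> eps0 slack0; rewrite /Xi le_min ler01 andbT.
have E1 : 1 <= expR eps by rewrite -expR0 ler_expR.
by apply: divr_ge0; nra.
Qed.

Section ExtremalInputs.
Variables (R : realType) (X Y : finType) (eps c : R) (K : X -> Y -> R).
Hypotheses (c_gt0 : 0 < c) (slack_ge0 : 0 <= 1 - #|X|%:R * c).
Hypothesis K_in_M : in_M eps c K.

Local Notation slack := (1 - #|X|%:R * c).

Lemma kernel_ge0 x y : 0 <= K x y.
Proof. by case: K_in_M => K_kernel _; case: (K_kernel x). Qed.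

Lemma kernel_row_sum x : \sum_y K x y = 1.
Proof. by case: K_in_M => K_kernel _; case: (K_kernel x). Qed.

Lemma push_ge0 (P : X -> R) y : (forall x, 0 <= P x) -> 0 <= push K P y.
Proof. by move=> P0; apply: sumr_ge0 => x _; rewrite mulr_ge0 ?kernel_ge0. Qed.

Lemma sum_push (P : X -> R) : \sum_y push K P y = \sum_x P x.
Proof.
rewrite /push exchange_big /=; apply: eq_bigr => x _.
by rewrite -mulr_suml kernel_row_sum mul1r.
Qed.

Definition corner_dist (x1 : X) : X -> R :=
  fun x => c + (if x == x1 then slack else 0).

Lemma sum_corner_dist (f : X -> R) x1 :
  \sum_x corner_dist x1 x * f x = c * \sum_x f x + slack * f x1.
Proof.
rewrite /corner_dist; under eq_bigr do rewrite mulrDl.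
rewrite big_split /= -mulr_sumr; congr (_ + _).
rewrite (bigD1 x1) //= eqxx big1 ?addr0 // => x /negbTE ->; exact: mul0r.
Qed.

Lemma corner_dist_Qset x1 : Qset c (corner_dist x1).
Proof.
have ge_c x : c <= corner_dist x1 x by rewrite /corner_dist lerDl; case: ifP.
split; [split|] => // [x|]; first by apply: le_trans (ge_c x); exact: ltW.
have := sum_corner_dist (fun=> 1) x1; under eq_bigr do rewrite mulr1.
rewrite sumr_const -[#|xpredT|]/#|X| -mulr_natl => ->; ring.
Qed.

Lemma kernel_le_corner x0 x1 y :
  K x0 y <= expR eps * (c * \sum_x K x y + slack * K x1 y).
Proof.
have push_corner : push K (corner_dist x1) y = c * \sum_x K x y + slack * K x1 y.
  by rewrite -sum_corner_dist; apply: eq_bigr => x _; rewrite mulrC.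
rewrite -push_corner.
have [[corner_ge0 _] _] := corner_dist_Qset x1.
have p_ge0 := push_ge0 y corner_ge0.
have E_gt0 := expR_gt0 eps.
have [K_le0 | K_gt0] := lerP (K x0 y) 0.
  by rewrite (le_trans K_le0) // mulr_ge0 // ltW.
have [p_gt0 | p_le0] := ltrP 0 (push K (corner_dist x1) y); last first.
  have K_le_S : K x0 y <= \sum_x K x y.
    by rewrite (bigD1 x0) //= lerDl sumr_ge0 // => x _; exact: kernel_ge0.
  rewrite push_corner in p_le0.
  have : 0 <= slack * K x1 y by rewrite mulr_ge0 ?kernel_ge0.
  have : 0 < c * K x0 y by rewrite mulr_gt0.
  have : c * K x0 y <= c * \sum_x K x y by rewrite ler_pM2l.
  lra.
have K_le_max : K x0 y <= \big[Num.max/0]_x K x y by exact: le_bigmax.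
have ratio_gt0 : 0 < (\big[Num.max/0]_x K x y) / push K (corner_dist x1) y.
  by rewrite divr_gt0 // (lt_le_trans K_gt0).
have := K_in_M.2 _ (corner_dist_Qset x1) y p_gt0.
rewrite /pml -ler_expR (lnK ratio_gt0) ler_pdivrMr // => max_le.
exact: le_trans K_le_max max_le.
Qed.

Lemma sum_test_le_corner (tau : Y -> R) x0 x1 : (forall y, 0 <= tau y) ->
  \sum_y tau y * K x0 y <= expR eps * (c * \sum_x \sum_y tau y * K x y
                                       + slack * \sum_y tau y * K x1 y).
Proof.
move=> tau0.
have -> : expR eps * (c * \sum_x \sum_y tau y * K x y + slack * \sum_y tau y * K x1 y)
    = \sum_y tau y * (expR eps * (c * \sum_x K x y + slack * K x1 y)).
  rewrite exchange_big /=; under [in LHS]eq_bigr do rewrite -mulr_sumr.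
  by rewrite !mulr_sumr -big_split mulr_sumr; apply: eq_bigr => y _ /=; ring.
by apply: ler_sum => y _; rewrite ler_wpM2l ?kernel_le_corner.
Qed.

Lemma push_le_ratio (P Q : X -> R) y : Qset c P -> Qset c Q ->
  push K P y <= (slack * expR eps + 1) * push K Q y.
Proof.
move=> [[_ P1] P_ge_c] [[_ Q1] Q_ge_c].
case: (pickP (fun _ : X => true)) => [x0 _ | X0]; last first.
  by rewrite /push !big_pred0 ?mulr0.
have [x1 _ min_x1] := @arg_minP _ R X x0 xpredT (K^~ y) isT.
set S := \sum_x K x y; set u := c * S + slack * K x1 y.
have push_excess (W : X -> R) : push K W y = c * S + \sum_x (W x - c) * K x y.
  rewrite /push /S mulr_sumr -big_split /=; apply: eq_bigr => x _; ring.
have sum_excess (W : X -> R) : \sum_x W x = 1 -> \sum_x (W x - c) = slack.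
  by move=> W1; rewrite sumrB W1 sumr_const -[#|xpredT|]/#|X| mulr_natl.
have u_le_Q : u <= push K Q y.
  rewrite push_excess lerD2l -(sum_excess Q Q1) mulr_suml.
  by apply: ler_sum => x _; rewrite ler_wpM2l ?subr_ge0 ?min_x1.
have P_le : push K P y <= c * S + slack * (expR eps * u).
  rewrite push_excess lerD2l -(sum_excess P P1) mulr_suml.
  by apply: ler_sum => x _; rewrite ler_wpM2l ?subr_ge0 ?kernel_le_corner.
have : 0 <= slack * K x1 y by rewrite mulr_ge0 ?kernel_ge0.
have : 0 <= slack * expR eps * (push K Q y - u).
  by rewrite mulr_ge0 ?subr_ge0 // mulr_ge0 ?expR_ge0.
move: P_le u_le_Q; rewrite /u; lra.
Qed.

Hypothesis eps_ge0 : 0 <= eps.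

Lemma test_gap_le_Xi (sg : Y -> R) x0 x1 : (forall y, 0 <= sg y <= 1) ->
  \sum_y sg y * K x0 y - \sum_y sg y * K x1 y <= Xi #|X| eps c.
Proof.
move=> sg01.
have sg0 y : 0 <= sg y by case/andP: (sg01 y).
have sgC0 y : 0 <= 1 - sg y by case/andP: (sg01 y); rewrite subr_ge0.
have sumC x : \sum_y (1 - sg y) * K x y = 1 - \sum_y sg y * K x y.
  by under eq_bigr do rewrite mulrBl mul1r; rewrite sumrB kernel_row_sum.
have h0 := sum_test_le_corner x0 x1 sg0.
move: (sum_test_le_corner x1 x0 sgC0) => /=.
have -> : \sum_x \sum_y (1 - sg y) * K x y = #|X|%:R - \sum_x \sum_y sg y * K x y.
  rewrite (eq_bigr _ (fun x _ => sumC x)) sumrB sumr_const.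
  by rewrite -[#|xpredT|]/#|X| -mulr_natl mulr1.
rewrite !sumC => h1.
have E1 : 1 <= expR eps by rewrite -expR0 ler_expR.
have test01 x : 0 <= \sum_y sg y * K x y <= 1.
  rewrite sumr_ge0 => [|y _]; last by rewrite mulr_ge0 ?kernel_ge0.
  rewrite -(kernel_row_sum x) ler_sum // => y _.
  by rewrite ler_piMl ?kernel_ge0 //; case/andP: (sg01 y).
(* Adding [h0] and [h1], the column sums [G] cancel because c N + slack = 1. *)
move: h0 h1 (test01 x0) (test01 x1) slack_ge0 E1 => /=.
set g0 := \sum_y _ * K x0 y; set g1 := \sum_y _ * K x1 y.
set G := \sum_x _; set E := expR eps; set n := #|X|%:R.
move=> h0 h1 /andP[? ?] /andP[? ?] ? ?.
rewrite /Xi le_min -/E -/n; apply/andP; split; last by lra.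
rewrite ler_pdivlMr; nra.
Qed.

Lemma push_TV_le (P Q : X -> R) : \sum_x P x = \sum_x Q x ->
  TV (push K P) (push K Q) <= Xi #|X| eps c * TV P Q.
Proof.
move=> PQ; rewrite !TV_sum_pos ?sum_push //.
pose sg y : R := if push K Q y <= push K P y then 1 else 0.
have sg01 y : 0 <= sg y <= 1 by rewrite /sg; case: ifP; rewrite ?lexx ?ler01.
have -> : \sum_y Num.max (push K P y - push K Q y) 0 =
          \sum_y sg y * (push K P y - push K Q y).
  apply: eq_bigr => y _; rewrite /sg -subr_ge0.
  by case: (lerP 0 (_ - _)); rewrite ?mul1r ?mul0r.
have -> : \sum_y sg y * (push K P y - push K Q y) =
          \sum_x (\sum_y sg y * K x y) * (P x - Q x).
  rewrite /push; under eq_bigr do rewrite -sumrB mulr_sumr.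
  rewrite exchange_big; apply: eq_bigr => x _ /=.
  by rewrite mulr_suml; apply: eq_bigr => y _; ring.
apply: sum_mul_le_osc => [x1 x2|]; first exact: test_gap_le_Xi.
by rewrite sumrB PQ subrr.
Qed.

End ExtremalInputs.

Theorem corollary2 (R : realType) (X Y : finType) (eps c delta : R)
    (K : X -> Y -> R) :
  (2 <= #|X|)%N ->
  0 < c -> c <= (#|X|%:R)^-1 ->
  0 <= eps ->
  in_M eps c K ->
  forall P Q : X -> R, Qset c P -> Qset c Q ->
  TV P Q <= delta ->
  hellinger2 (push K P) (push K Q) <=
    Xi #|X| eps c *
    (2 - 4 / (Num.sqrt ((1 - #|X|%:R * c) * expR eps + 1) + 1)) * delta.
Proof.
move=> N_ge2 c_gt0 c_le eps_ge0 K_in_M P Q P_in Q_in TV_le.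
have slack_ge0 : 0 <= 1 - #|X|%:R * c.
  by rewrite subr_ge0 -ler_pdivlMl ?mulr1 // ltr0n (leq_trans _ N_ge2).
set B := _ * expR eps + 1.
have B_ge1 : 1 <= B by rewrite lerDr mulr_ge0 ?expR_ge0.
have const_ge0 : 0 <= 2 - 4 / (Num.sqrt B + 1).
  have : 1 <= Num.sqrt B by rewrite -sqrtr1 ler_sqrt //; lra.
  by move=> sB1; rewrite subr_ge0 ler_pdivrMr; lra.
have push_in (W : X -> R) : Qset c W -> forall y, 0 <= push K W y.
  by move=> [[W_ge0 _] _] y; exact: push_ge0 K_in_M _ _ W_ge0.
apply: le_trans (hellinger2_le_TV (push_in P P_in) (push_in Q Q_in) B_ge1
  (fun y => push_le_ratio c_gt0 slack_ge0 K_in_M y P_in Q_in)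
  (fun y => push_le_ratio c_gt0 slack_ge0 K_in_M y Q_in P_in)) _.
rewrite [Xi _ _ _ * _]mulrC -mulrA ler_wpM2l //.
apply: le_trans (push_TV_le c_gt0 slack_ge0 K_in_M eps_ge0 _) _.
  by rewrite P_in.1.2 Q_in.1.2.
by rewrite ler_wpM2l ?Xi_ge0.
Qed.
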